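(* Let $h\ge 3$ and let $W\in\mathcal W^2_{h\times 3}$ be $2$-full. Then: (i) $W[1]=(\blacksquare,\blacksquare,\blacksquare)$ and $W[2]=(\blacksquare,\square,\blacksquare)$; (ii) if $W$ is atomic, then $|W[i]|_\blacksquare=2$ for all $1<i<h$; (iii) if $W$ is atomic, there are no $i$ with $1<i<h-1$ and $j\in\{1,2\}$ such that the four cells $(i,j),(i,j+1),(i+1,j),(i+1,j+1)$ are all filled; (iv) if $W$ is atomic, neither column $W^t[1]$ nor column $W^t[3]$ contains two vertically consecutive empty cells.
   Context: A 2-dimensional binary word of dimensions $h\times w$ is an $h\times w$ matrix $W$ with entries in $\{\square,\blacksquare\}$; entries $\blacksquare$ are filled cells, entries $\square$ empty cells, and $|U|_\blacksquare$ is the number of filled cells of $U$. Two cells $(i,j),(i',j')$ are adjacent if $|i-i'|+|j-j'|=1$; the degree of a filled cell is the number of filled cells adjacent to it. $\mathcal W^2_{h\times w}$ is the set of $h\times w$ binary words in which every filled cell has degree at most $2$; $W\in\mathcal W^2_{h\times w}$ is $2$-full if $|W|_\blacksquare$ is maximal among words of $\mathcal W^2_{h\times w}$. $W[i]$ denotes the $i$-th row of $W$ and $W^t[j]$ its $j$-th column. A word $W\in\mathcal W^2_{h\times w}$ is atomic if no row of $W$ consists only of empty cells. *)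

(* A 2-dimensional binary word of dimensions h x w is a
   matrix 'M[bool]_(h, w); true = filled cell, false = empty cell.
   Indices are 0-based in Rocq (paper row i  <->  Rocq row i-1). *)
From mathcomp Require Import all_boot all_order all_algebra.
Set Implicit Arguments. Unset Strict Implicit. Unset Printing Implicit Defensive.

Definition word (h w : nat) := 'M[bool]_(h, w).

Definition adjacent (h w : nat) (p q : 'I_h * 'I_w) : bool :=
  (`|(val p.1 : int) - (val q.1 : int)|%N + `|(val p.2 : int) - (val q.2 : int)|%N == 1)%N.

Definition degree (h w : nat) (W : word h w) (i : 'I_h) (j : 'I_w) : nat :=
  #|[set q : 'I_h * 'I_w | W q.1 q.2 && adjacent (i, j) q]|.

Definition nfilled (h w : nat) (W : word h w) : nat :=
  #|[set p : 'I_h * 'I_w | W p.1 p.2]|.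

Definition inW2 (h w : nat) (W : word h w) : Prop :=
  forall (i : 'I_h) (j : 'I_w), W i j -> (degree W i j <= 2)%N.

Definition two_full (h w : nat) (W : word h w) : Prop :=
  inW2 W /\ forall V : word h w, inW2 V -> (nfilled V <= nfilled W)%N.

Definition atomic (h w : nat) (W : word h w) : Prop :=
  forall i : 'I_h, exists j : 'I_w, W i j.

(* total 0-based cell accessor: W i j if (i, j) is inside the word, else false *)
Definition cell (h w : nat) (W : word h w) (i j : nat) : bool :=
  match @insub _ (fun k => k < h) _ i, @insub _ (fun k => k < w) _ j with
  | Some a, Some b => W a b
  | _, _ => false
  end.

Definition row_count (h w : nat) (W : word h w) (i : 'I_h) : nat :=
  #|[set j : 'I_w | W i j]|.

From mathcomp Require Import all_boot all_order all_algebra zify.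
Set Implicit Arguments. Unset Strict Implicit. Unset Printing Implicit Defensive.

(* A word of width 3 is a sequence of rows in {0,1}^3 and the degree condition only
   relates three consecutive rows, so the number of filled cells is the weight of a path
   in a finite graph whose states are pairs of consecutive rows.  A forward potential F
   and a backward potential Q on these states bound the weight of the first k rows by
   F + 2k and that of the remaining rows by Q + 2(h - k).  The frame word (full first and
   last rows, empty middle column) has 2h + 2 filled cells, so along a 2-full word every
   state satisfies F + Q >= 2; (i)-(iv) are then finite facts about these tight states. *)

Lemma card_set_sumb (T : finType) (P : pred T) : #|[set x | P x]| = \sum_x P x.
Proof. by rewrite -sum1_card big_mkcond; apply: eq_bigr => x _; rewrite inE; case: (P x). Qed.

Section Cells.
Variables (h w : nat) (W : word h w).

Lemma cell_ord (a : 'I_h) (b : 'I_w) : cell W a b = W a b.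
Proof.
rewrite /cell; case: insubP => [a' _ Ea|]; last by rewrite ltn_ord.
case: insubP => [b' _ Eb|]; last by rewrite ltn_ord.
by congr (W _ _); apply: val_inj.
Qed.

Lemma cell_out i j : ~~ ((i < h) && (j < w)) -> cell W i j = false.
Proof. by rewrite /cell; case: insubP => [a -> _|//]; case: insubP => [b -> _|]. Qed.

Lemma sum_cell_at (i j : nat) :
  \sum_(q : 'I_h * 'I_w) (W q.1 q.2 && (q.1 == i :> nat) && (q.2 == j :> nat)) = cell W i j.
Proof.
have [/andP[hi hj] | out] := boolP ((i < h) && (j < w)); last first.
  rewrite cell_out // big1 // => q _; apply/eqP; rewrite eqb0; apply: contra out.
  by case/andP=> /andP[_ /eqP <-] /eqP <-; rewrite !ltn_ord.
rewrite (bigD1 (Ordinal hi, Ordinal hj)) //= big1 ?addn0.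
  by rewrite !eqxx !andbT -(cell_ord (Ordinal hi) (Ordinal hj)).
move=> [a b] /= ne; apply/eqP; rewrite eqb0; apply: contra ne => /andP[/andP[_ /eqP ea] /eqP eb].
by apply/eqP; congr (_, _); apply: val_inj.
Qed.
End Cells.

Lemma dist1_indicator (a b i j : nat) :
  (`|(i : int) - (a : int)|%N + `|(j : int) - (b : int)|%N == 1)%N =
  (if i is i'.+1 then (a == i') && (b == j) else false) + ((a == i.+1) && (b == j)) +
  (if j is j'.+1 then (a == i) && (b == j') else false) + ((a == i) && (b == j.+1)) :> nat.
Proof. by case: i => [|i]; case: j => [|j]; repeat case: eqP => ?; simpl; lia. Qed.

Definition neighbours h w (W : word h w) (i j : nat) : nat :=
  (if i is i'.+1 then cell W i' j else false) + cell W i.+1 j +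
  (if j is j'.+1 then cell W i j' else false) + cell W i j.+1.

Lemma degree_neighbours h w (W : word h w) (i : 'I_h) (j : 'I_w) :
  degree W i j = neighbours W i j.
Proof.
pose at_cell (q : 'I_h * 'I_w) (a b : nat) : nat := W q.1 q.2 && (q.1 == a :> nat) && (q.2 == b :> nat).
rewrite /degree card_set_sumb (eq_bigr (fun q =>
    (if nat_of_ord i is i'.+1 then at_cell q i' j else 0) + at_cell q i.+1 j +
    (if nat_of_ord j is j'.+1 then at_cell q i j' else 0) + at_cell q i j.+1)); last first.
  move=> q _; rewrite /adjacent /at_cell /=.
  case: (W q.1 q.2); rewrite ?andbF /= ?dist1_indicator //.
  by case: (nat_of_ord i); case: (nat_of_ord j).
rewrite !big_split /= !sum_cell_at /neighbours.
congr (_ + _ + _ + _).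
  by case: (nat_of_ord i) => [|k]; [exact: big1_eq | exact: sum_cell_at].
by case: (nat_of_ord j) => [|k]; [exact: big1_eq | exact: sum_cell_at].
Qed.

Definition row3 := (bool * bool * bool)%type.

Definition empty_row : row3 := (false, false, false).

Definition rcell (x : row3) (j : nat) : bool :=
  let: (x0, x1, x2) := x in
  match j with 0 => x0 | 1 => x1 | 2 => x2 | _ => false end.

Definition weight (x : row3) : nat := let: (x0, x1, x2) := x in x0 + x1 + x2.
Arguments weight : simpl never.

Definition row_of h (W : word h 3) (i : nat) : row3 := (cell W i 0, cell W i 1, cell W i 2).

Definition prev_row h (W : word h 3) (i : nat) : row3 :=
  if i is i'.+1 then row_of W i' else empty_row.

Definition deg2_ok (a b c : row3) : bool :=
  let: (a0, a1, a2) := a in let: (b0, b1, b2) := b in let: (c0, c1, c2) := c in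
  [&& b0 ==> (a0 + c0 + b1 <= 2), b1 ==> (a1 + c1 + b0 + b2 <= 2)
    & b2 ==> (a2 + c2 + b1 <= 2)].

Lemma cell_row h (W : word h 3) i j : cell W i j = rcell (row_of W i) j.
Proof. by case: j => [|[|[|j]]] //=; rewrite cell_out // negb_and orbT. Qed.

Lemma neighbours_rows h (W : word h 3) i j :
  neighbours W i j = rcell (prev_row W i) j + rcell (row_of W i.+1) j +
    (if j is j'.+1 then rcell (row_of W i) j' else false) + rcell (row_of W i) j.+1.
Proof. by rewrite /neighbours; case: i => [|i]; case: j => [|[|[|j]]]; rewrite !cell_row. Qed.

Lemma deg2_okP a b c :
  reflect (forall j, j < 3 -> rcell b j ->
             rcell a j + rcell c j + (if j is j'.+1 then rcell b j' else false) + rcell b j.+1 <= 2)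
          (deg2_ok a b c).
Proof.
case: a b c => [[a0 a1] a2] [[b0 b1] b2] [[c0 c1] c2]; apply: (iffP and3P).
  by case=> /implyP ? /implyP ? /implyP ? [|[|[|j]]] //= _; rewrite ?addn0.
move=> H; split; apply/implyP.
- by move/(H 0 isT); rewrite /= addn0.
- exact: H 1 isT.
- by move/(H 2 isT); rewrite /= addn0.
Qed.

Lemma inW2_rowsP h (W : word h 3) :
  inW2 W <-> forall i, i < h -> deg2_ok (prev_row W i) (row_of W i) (row_of W i.+1).
Proof.
split=> [W2 i hi | ok i j Wij].
  apply/deg2_okP => j hj; have := W2 (Ordinal hi) (Ordinal hj).
  by rewrite -cell_ord cell_row degree_neighbours neighbours_rows.
rewrite degree_neighbours neighbours_rows.
by apply: (deg2_okP _ _ _ (ok i (ltn_ord i))) (ltn_ord j) _; rewrite -cell_row cell_ord.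
Qed.

Lemma row_count_weight h (W : word h 3) (i : 'I_h) : row_count W i = weight (row_of W i).
Proof. by rewrite /row_count card_set_sumb !big_ord_recl big_ord0 addn0 addnA -!cell_ord. Qed.

Lemma nfilled_rows h (W : word h 3) : nfilled W = \sum_(0 <= i < h) weight (row_of W i).
Proof.
rewrite /nfilled card_set_sumb -(pair_bigA _ (fun i j => (W i j : nat))) big_mkord.
by apply: eq_bigr => i _; rewrite -row_count_weight /row_count card_set_sumb.
Qed.

Definition rows : seq row3 :=
  [:: (false, false, false); (false, false, true); (false, true, false); (false, true, true);
      (true, false, false); (true, false, true); (true, true, false); (true, true, true)].

Lemma mem_rows x : x \in rows.
Proof. by case: x => [[[] []] []]. Qed.

Lemma all_rows2P (P : row3 -> row3 -> bool) :
  all (fun a => all (P a) rows) rows -> forall a b, P a b.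
Proof. by move=> /allP H a b; apply: (allP (H a (mem_rows a))); apply: mem_rows. Qed.

Lemma all_rows3P (P : row3 -> row3 -> row3 -> bool) :
  all (fun a => all (fun b => all (P a b) rows) rows) rows -> forall a b c, P a b c.
Proof. by move=> H a; apply: all_rows2P; apply: (allP H a (mem_rows a)). Qed.

(* A potential is a table indexed by pairs of consecutive rows, in the order of [rows];
   missing entries read as 0. *)
Definition potential := seq (seq nat).

Definition pot (T : potential) (a b : row3) : nat :=
  nth 0 (nth [::] T (index a rows)) (index b rows).

Definition relax_forward (T : potential) : potential :=
  [seq [seq foldr maxn (pot T b c) [seq pot T a b + weight b - 2 | a <- rows & deg2_ok a b c]
       | c <- rows] | b <- rows].

Definition relax_backward (T : potential) : potential :=
  [seq [seq foldr maxn (pot T a b) [seq pot T b c + weight b - 2 | c <- rows & deg2_ok a b c]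
       | b <- rows] | a <- rows].

(* Least solutions of the step inequalities below, by value iteration from the zero
   potential (stationary after five rounds): [fwd_pot a b] bounds the excess over two
   cells per row of a prefix ending with rows [a], [b]. *)
Definition fwd_table : potential := Eval vm_compute in iter 8 relax_forward [::].
Definition bwd_table : potential := Eval vm_compute in iter 8 relax_backward [::].

Definition fwd_pot := pot fwd_table.
Definition bwd_pot := pot bwd_table.

Lemma fwd_pot_step a b c : deg2_ok a b c -> fwd_pot a b + weight b <= fwd_pot b c + 2.
Proof. by apply/implyP; move: a b c; apply: all_rows3P; vm_compute. Qed.

Lemma bwd_pot_step a b c : deg2_ok a b c -> bwd_pot b c + weight b <= bwd_pot a b + 2.
Proof. by apply/implyP; move: a b c; apply: all_rows3P; vm_compute. Qed.

Section PotentialBounds.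
Variables (h : nat) (W : word h 3) (F Q : row3 -> row3 -> nat).
Hypothesis W_ok : forall i, i < h -> deg2_ok (prev_row W i) (row_of W i) (row_of W i.+1).
Hypothesis F_step : forall a b c, deg2_ok a b c -> F a b + weight b <= F b c + 2.
Hypothesis Q_step : forall a b c, deg2_ok a b c -> Q b c + weight b <= Q a b + 2.

Lemma prefix_weight_le k :
  k <= h -> \sum_(0 <= i < k) weight (row_of W i) <= F (prev_row W k) (row_of W k) + 2 * k.
Proof.
elim: k => [|k IH hk]; first by rewrite big_geq.
rewrite big_nat_recr //=; change (prev_row W k.+1) with (row_of W k).
by have := IH (ltnW hk); have := F_step (W_ok hk); lia.
Qed.

Lemma suffix_weight_le k :
  \sum_(k <= i < h) weight (row_of W i) <= Q (prev_row W k) (row_of W k) + 2 * (h - k).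
Proof.
elim: {k}(h - k) {-2}k (erefl (h - k)) => [|d IH] k hk; first by rewrite big_geq //; lia.
have lt_kh : k < h by lia.
rewrite big_ltn //=; have := IH k.+1 ltac:(lia); change (prev_row W k.+1) with (row_of W k).
by have := Q_step (W_ok lt_kh); lia.
Qed.

End PotentialBounds.

Definition frame_word h : word h 3 :=
  (\matrix_(i < h, j < 3) [|| i == 0 :> nat, i == h.-1 :> nat | j != 1 :> nat])%R.

Lemma row_of_frame_word h i :
  row_of (frame_word h) i = if i < h then (true, (i == 0) || (i == h.-1), true) else empty_row.
Proof.
rewrite /row_of /cell; case: insubP => [a -> <-|/negbTE -> //].
by rewrite !insubT // => *; rewrite !mxE /= !orbT orbF.
Qed.

Lemma frame_word_inW2 h : 2 < h -> inW2 (frame_word h).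
Proof.
move=> h_gt2; apply/inW2_rowsP => i lt_ih.
rewrite /prev_row; case: i lt_ih => [|i] lt_ih; rewrite !row_of_frame_word lt_ih.
  have -> : (1 == h.-1) = false by apply/eqP; lia.
  by rewrite ltnW.
rewrite ltnW //=; have [lt_i2h | le_hi2] := ltnP i.+2 h.
  by have -> : (i.+1 == h.-1) = false by apply/eqP; lia.
have -> : i.+1 == h.-1 by apply/eqP; lia.
by have -> : (i == 0) || (i == h.-1) = false by apply/norP; split; apply/eqP; lia.
Qed.

Lemma nfilled_frame_word h : 2 < h -> nfilled (frame_word h) = 2 * h + 2.
Proof.
case: h => [|[|[|h]]] // _; rewrite nfilled_rows big_nat_recr // big_nat_recl //.
rewrite !row_of_frame_word /= ltnS leqnn (@eq_big_nat _ _ _ 0 h.+1 _ (fun _ => 2)).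
  by rewrite sum_nat_const_nat /weight /=; lia.
move=> i /andP[_ lt_ih]; rewrite row_of_frame_word /= ltnS ltnW //.
by have -> : (i.+1 == h.+2) = false by apply/eqP; lia.
Qed.

Definition tight (a b : row3) : bool := 2 <= fwd_pot a b + bwd_pot a b.

Lemma first_rows_forced a b :
  deg2_ok empty_row a b && (4 <= weight a + bwd_pot a b) ->
  (a == (true, true, true)) && (b == (true, false, true)).
Proof. by apply/implyP; move: a b; apply: all_rows2P; vm_compute. Qed.

Lemma tight_middle_weight a b c :
  [&& a != empty_row, b != empty_row, c != empty_row, deg2_ok a b c, tight a b & tight b c] ->
  weight b == 2.
Proof. by apply/implyP; move: a b c; apply: all_rows3P; vm_compute. Qed.

Lemma tight_no_square b c :
  [&& b != empty_row, c != empty_row & tight b c] ->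
  all (fun j => ~~ [&& rcell b j, rcell b j.+1, rcell c j & rcell c j.+1]) (iota 0 2).
Proof. by apply/implyP; move: b c; apply: all_rows2P; vm_compute. Qed.

Lemma tight_side_columns b c :
  [&& b != empty_row, c != empty_row & tight b c] -> all (fun j => rcell b j || rcell c j) [:: 0; 2].
Proof. by apply/implyP; move: b c; apply: all_rows2P; vm_compute. Qed.

Lemma atomic_row_nonempty h (W : word h 3) i : atomic W -> i < h -> row_of W i != empty_row.
Proof.
move=> W_atomic lt_ih; have [j Wij] := W_atomic (Ordinal lt_ih).
by apply: contraTneq Wij => E; rewrite -cell_ord cell_row E; case: j => [[|[|[|]]]].
Qed.

Section TwoFullWords.
Variables (h : nat) (W : word h 3).
Hypotheses (h_gt2 : 2 < h) (W_full : two_full W).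

Lemma two_full_rows_ok i : i < h -> deg2_ok (prev_row W i) (row_of W i) (row_of W i.+1).
Proof. exact: (inW2_rowsP W).1 W_full.1 i. Qed.

Lemma two_full_weight : 2 * h + 2 <= \sum_(0 <= i < h) weight (row_of W i).
Proof. by rewrite -nfilled_rows -(nfilled_frame_word h_gt2); apply: W_full.2; apply: frame_word_inW2. Qed.

Lemma two_full_tight k : k <= h -> tight (prev_row W k) (row_of W k).
Proof.
move=> le_kh; rewrite /tight.
have := prefix_weight_le two_full_rows_ok fwd_pot_step le_kh.
have := suffix_weight_le two_full_rows_ok bwd_pot_step k.
by have := two_full_weight; rewrite (@big_cat_nat _ _ _ k) //=; lia.
Qed.

Lemma two_full_first_rows : row_of W 0 = (true, true, true) /\ row_of W 1 = (true, false, true).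
Proof.
have h_gt0 : 0 < h by lia.
have := suffix_weight_le two_full_rows_ok bwd_pot_step 1.
have := two_full_weight; rewrite big_ltn //=; change (prev_row W 1) with (row_of W 0).
move=> weight_ge weight_le.
have /first_rows_forced/andP[/eqP -> /eqP ->] // : deg2_ok empty_row (row_of W 0) (row_of W 1) &&
  (4 <= weight (row_of W 0) + bwd_pot (row_of W 0) (row_of W 1)).
by rewrite (two_full_rows_ok h_gt0) /=; lia.
Qed.

End TwoFullWords.

Theorem mainTheorem4 (h : nat) (W : word h 3) :
  (3 <= h)%N -> two_full W ->
  ((forall j : nat, (j < 3)%N -> cell W 0 j = true) /\
   (forall j : nat, (j < 3)%N -> cell W 1 j = (j != 1%N))) /\
  (atomic W ->
   (forall i : 'I_h, (0 < val i)%N -> (val i < h.-1)%N -> row_count W i = 2%N) /\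
   (forall i j : nat, (0 < i)%N -> (i < h - 2)%N -> (j < 2)%N ->
      ~~ [&& cell W i j, cell W i j.+1, cell W i.+1 j & cell W i.+1 j.+1]) /\
   (forall i j : nat, (i.+1 < h)%N -> (j = 0%N \/ j = 2%N) ->
      ~~ (~~ cell W i j && ~~ cell W i.+1 j))).
Proof.
move=> h_gt2 W_full; split.
  have [row0 row1] := two_full_first_rows h_gt2 W_full.
  by split=> -[|[|[|j]]] // _; rewrite cell_row ?row0 ?row1.
move=> W_atomic.
have tight_pair i : i.+1 < h ->
    [&& row_of W i != empty_row, row_of W i.+1 != empty_row & tight (row_of W i) (row_of W i.+1)].
  move=> lt_i1h; rewrite !atomic_row_nonempty ?(ltnW lt_i1h) //=.
  exact: two_full_tight h_gt2 W_full i.+1 (ltnW lt_i1h).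
split; [|split].
- case=> -[|i] //= lt_i1h _ lt_i1h1; rewrite row_count_weight; apply/eqP.
  have /and3P[na nb tab] := tight_pair i lt_i1h.
  have /and3P[_ nc tbc] := tight_pair i.+1 ltac:(lia).
  by apply: (tight_middle_weight (a := row_of W i) (c := row_of W i.+2)); rewrite na nb nc tab tbc (two_full_rows_ok W_full lt_i1h).
- move=> i j _ lt_i j_lt2; have := allP (tight_no_square (tight_pair i ltac:(lia))) j.
  by rewrite mem_iota j_lt2 !cell_row; apply.
- move=> i j lt_i1h j_side; have := allP (tight_side_columns (tight_pair i lt_i1h)) j.
  by rewrite !cell_row negb_and !negbK; apply; case: j_side => ->.
Qed.
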